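(* Let $T$ be a tree with edges $e_1,\ldots,e_m$. For $k\neq l$, the forest $T-\{e_k,e_l\}$ has three connected components, exactly one of which contains an end-vertex of both $e_k$ and $e_l$; let $m_1(e_k,e_l)$ and $m_2(e_k,e_l)$ be the numbers of edges in the other two components. Then $$WW_e(T)=2W_e(T)+\sum_{k=1}^{m-1}\sum_{l=k+1}^{m}m_1(e_k,e_l)\,m_2(e_k,e_l)-\binom{m}{2}.$$
   Context: The distance $d(e,f)$ between edges is the distance between $e$ and $f$ as vertices of the line graph. The edge-Wiener index is $W_e(G)=\sum_{\{e,f\}\subseteq E(G)}d(e,f)$ and the edge-hyper-Wiener index is $WW_e(G)=\frac12\sum_{\{e,f\}\subseteq E(G)}d(e,f)+\frac12\sum_{\{e,f\}\subseteq E(G)}d(e,f)^2$, sums over unordered pairs of distinct edges. *)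

From mathcomp Require Import all_boot all_order all_algebra.
Set Implicit Arguments. Unset Strict Implicit. Unset Printing Implicit Defensive.
Import Order.TTheory GRing.Theory Num.Theory.

(* A simple graph on a finite vertex type T is a symmetric irreflexive e : rel T. *)

Definition edges (T : finType) (e : rel T) : {set {set T}} :=
  [set A : {set T} | [exists x, exists y, e x y && (A == [set x; y])]].

Definition line_adj (T : finType) (e : rel T) : rel {set T} :=
  fun A B => [&& A \in edges e, B \in edges e, A != B & A :&: B != set0].

(* Graph distance: least n such that there is an r-walk of length n from x to y.
   (Shortest walks have length < #|U|.) *)
Definition gdist (U : finType) (r : rel U) (x y : U) : nat :=
  find (fun n => [exists p : n.-tuple U, path r x p && (last x p == y)])
       (iota 0 #|U|).

Definition edist (T : finType) (e : rel T) (A B : {set T}) : nat :=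
  gdist (line_adj e) A B.

Definition connected (T : finType) (e : rel T) : Prop := forall x y, connect e x y.
Definition acyclic (T : finType) (e : rel T) : Prop :=
  forall c : seq T, uniq c -> 2 < size c -> ~~ cycle e c.
Definition is_tree (T : finType) (e : rel T) : Prop :=
  [/\ symmetric e, irreflexive e, connected e & acyclic e].

Definition Wedge (T : finType) (e : rel T) : nat :=
  let s := enum (edges e) in
  \sum_(k < size s) \sum_(l < size s | k < l) edist e (nth set0 s k) (nth set0 s l).

Definition Wedge2 (T : finType) (e : rel T) : nat :=
  let s := enum (edges e) in
  \sum_(k < size s) \sum_(l < size s | k < l) (edist e (nth set0 s k) (nth set0 s l)) ^ 2.

Local Open Scope ring_scope.
Definition WWedge (T : finType) (e : rel T) : rat :=
  (Wedge e)%:R / 2 + (Wedge2 e)%:R / 2.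
Local Close Scope ring_scope.

Definition del2 (T : finType) (e : rel T) (f g : {set T}) : rel T :=
  fun x y => [&& e x y, [set x; y] != f & [set x; y] != g].

Definition comps (T : finType) (r : rel T) : {set {set T}} :=
  [set [set y | connect r x y] | x : T].

Definition nedges_in (T : finType) (e : rel T) (f g C : {set T}) : nat :=
  #|[set A in edges e | [&& A != f, A != g & A \subset C]]|.

(* m1(f,g) * m2(f,g): product of the edge counts of the components of
   T - {f,g} that do NOT contain an end-vertex of both f and g. *)
Definition m12 (T : finType) (e : rel T) (f g : {set T}) : nat :=
  \prod_(C in comps (del2 e f g) | ~~ ((C :&: f != set0) && (C :&: g != set0)))
     nedges_in e f g C.

From mathcomp Require Import all_boot all_order all_algebra zify lra.
Import Order.TTheory GRing.Theory Num.Theory.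

Set Implicit Arguments. Unset Strict Implicit. Unset Printing Implicit Defensive.

(* In a tree, two distinct edges a and b are at line-graph distance N(a,b) + 1,
   where N(a,b) counts the edges g other than a and b whose removal disconnects a
   from b: every walk from a to b in the line graph passes through each such g, and
   walking along the tree path from a towards b passes through only them and b.  Since
   (N+1)^2 + 2 = 3(N+1) + N(N-1), the theorem reduces to counting, over ordered pairs
   (a,b) of distinct edges, the ordered pairs (g,h) of distinct edges that both
   separate a from b.  Exchanging the two summations, (a,b) is separated by both g
   and h exactly when one of a, b lies in the component of T - {g,h} touching only g
   and the other in the component touching only h: 2 m1(g,h) m2(g,h) pairs. *)

Lemma find_iota_min (P : pred nat) M n :
  n < M -> P n -> (forall k, k < n -> ~~ P k) -> find P (iota 0 M) = n.
Proof.
move=> ltnM Pn minn; rewrite -(subnKC (ltnW ltnM)) iotaD find_cat size_iota.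
have -> : has P (iota 0 n) = false.
  by apply/hasPn => k; rewrite mem_iota => /andP[_]; apply: minn.
by case: (M - n) (subn_gt0 n M) => [|k]; rewrite ltnM /= ?Pn ?addn0.
Qed.

Lemma gdist_exact (U : finType) (r : rel U) x y n : n < #|U| ->
  (exists p, [/\ path r x p, last x p = y & size p = n]) ->
  (forall p, path r x p -> last x p = y -> n <= size p) ->
  gdist r x y = n.
Proof.
move=> ltnU [p [pp lp sp]] minp; apply: find_iota_min => //.
  by apply/existsP; exists (tcast sp (in_tuple p)); rewrite val_tcast /= pp lp eqxx.
move=> k ltkn; apply/existsP=> -[t /andP[pt /eqP lt]].
by have := minp t pt lt; rewrite size_tuple leqNgt ltkn.
Qed.

Lemma double_bin2 n : 'C(n, 2).*2 = n * n.-1.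
Proof. by case: n => // n; rewrite bin2 halfK oddM /= andNb subn0. Qed.

Definition offdiag (U : finType) (A : {set U}) : {set U * U} :=
  [set P | [&& P.1 \in A, P.2 \in A & P.1 != P.2]].

Lemma in_offdiag (U : finType) (A : {set U}) P :
  (P \in offdiag A) = [&& P.1 \in A, P.2 \in A & P.1 != P.2].
Proof. by rewrite in_set. Qed.

Lemma card_offdiag (U : finType) (A : {set U}) : #|offdiag A| = #|A| * #|A|.-1.
Proof.
rewrite -sum1_card (eq_bigl _ _ (fun P => in_set _ _)) /=.
rewrite -(pair_big_dep (mem A) (fun a b => (b \in A) && (a != b)) (fun _ _ => 1)) /=.
rewrite -sum_nat_const; apply: eq_bigr => a aA.
rewrite sum1dep_card (cardsD1 a A) aA /=.
by apply: eq_card => b; rewrite !inE andbC eq_sym.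
Qed.

Lemma double_count (I J : finType) (A : {set I}) (B : {set J}) (R : I -> J -> bool) :
  \sum_(i in A) #|[set j in B | R i j]| = \sum_(j in B) #|[set i in A | R i j]|.
Proof.
have card_sum (K : finType) (C : {set K}) (Q : pred K) :
    #|[set k in C | Q k]| = \sum_(k in C) Q k.
  by rewrite -sum1dep_card big_mkcondr; apply: eq_bigr => k _; case: (Q k).
under eq_bigr do rewrite card_sum.
by rewrite exchange_big; under [RHS]eq_bigr do rewrite card_sum.
Qed.

Lemma sum_neq_ltn n (G : 'I_n -> 'I_n -> nat) :
  \sum_(k < n) \sum_(l < n | k != l) G k l = \sum_(k < n) \sum_(l < n | k < l) (G k l + G l k).
Proof.
under [RHS]eq_bigr do rewrite big_split.
rewrite big_split /= [X in _ = _ + X](exchange_big_dep xpredT) //= -big_split /=.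
apply: eq_bigr => k _.
rewrite big_mkcond [X in _ = X + _]big_mkcond [X in _ = _ + X]big_mkcond -big_split /=.
by apply: eq_bigr => l _; rewrite neq_ltn; case: ltngtP; rewrite ?addn0.
Qed.

Section OrderedPairs.
Variables (U : finType) (x0 : U) (A : {set U}) (s : seq U).
Hypotheses (s_uniq : uniq s) (s_A : s =i A).

Lemma size_enum_set : size s = #|A|.
Proof. by rewrite -(card_uniqP s_uniq); apply: eq_card. Qed.

Lemma sum_nth_set (G : U -> nat) : \sum_(k < size s) G (nth x0 s k) = \sum_(a in A) G a.
Proof. by rewrite -(eq_bigl _ _ s_A) -big_uniq // (big_nth x0) big_mkord. Qed.

Lemma sum_ltn_pairs (F : U -> U -> nat) : {in A &, forall a b, F a b = F b a} ->
  2 * \sum_(k < size s) \sum_(l < size s | k < l) F (nth x0 s k) (nth x0 s l)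
  = \sum_(P in offdiag A) F P.1 P.2.
Proof.
move=> Fsym; have inA k : k < size s -> nth x0 s k \in A by rewrite -s_A; apply: mem_nth.
rewrite (eq_bigl _ _ (fun P => in_set _ _)) /=.
rewrite -(pair_big_dep (mem A) (fun a b => (b \in A) && (a != b)) F) /=.
rewrite -sum_nth_set.
under [RHS]eq_bigr => a _ do rewrite big_mkcondr -sum_nth_set -big_mkcond /=.
under [RHS]eq_bigr => k _ do under eq_bigl => l do rewrite nth_uniq //.
rewrite sum_neq_ltn mul2n -addnn -big_split /=; apply: eq_bigr => k _.
rewrite -big_split /=; apply: eq_bigr => l _; congr (_ + _); exact: Fsym (inA _ _) (inA _ _).
Qed.

End OrderedPairs.

Section DeleteEdge.
Variable T : finType.
Implicit Types (r : rel T) (A : {set T}) (x y : T).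

Definition deledge r A : rel T := fun x y => r x y && ([set x; y] != A).

Lemma edgesP r A : reflect (exists x y, r x y /\ A = [set x; y]) (A \in edges r).
Proof.
rewrite inE; apply: (iffP existsP) => [[x /existsP[y /andP[rxy /eqP->]]]|[x [y [rxy ->]]]].
  by exists x, y.
by exists x; apply/existsP; exists y; rewrite rxy eqxx.
Qed.

Lemma edges_set2 r x y : r x y -> [set x; y] \in edges r.
Proof. by move=> rxy; apply/edgesP; exists x, y. Qed.

Lemma edges_neq0 r A : A \in edges r -> A != set0.
Proof. by case/edgesP=> x [y [_ ->]]; apply/set0Pn; exists x; rewrite set21. Qed.

Lemma connect_uniq_path r x y : connect r x y ->
  exists p, [/\ path r x p, uniq (x :: p) & last x p = y].
Proof. by case/connectP=> p rp ->; case: (shortenP rp) => q rq uq _; exists q. Qed.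

Section Symmetric.
Variable r : rel T.
Hypothesis r_sym : symmetric r.

Lemma deledge_sym A : symmetric (deledge r A).
Proof. by move=> x y; rewrite /deledge r_sym setUC. Qed.

Lemma connect_deledge_sym A : connect_sym (deledge r A).
Proof. exact/sym_connect_sym/deledge_sym. Qed.

Lemma connect_edge_ends A B x y : B \in edges r -> B != A -> x \in B -> y \in B ->
  connect (deledge r A) x y.
Proof.
case/edgesP=> p [q [rpq ->]] qA.
have dpq : deledge r A p q by rewrite /deledge rpq qA.
have dqp : deledge r A q p by rewrite deledge_sym.
by do 2 case/set2P=> ->; rewrite ?connect0 ?connect1.
Qed.

Lemma connect_deledge_split u v x y : connect r x y ->
  connect (deledge r [set u; v]) x y \/
  (connect (deledge r [set u; v]) x u || connect (deledge r [set u; v]) x v) &&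
  (connect (deledge r [set u; v]) y u || connect (deledge r [set u; v]) y v).
Proof.
move=> /connectP[p rp ->]; have c_sym := connect_deledge_sym [set u; v].
have c_uv z : z \in [set u; v] ->
    connect (deledge r [set u; v]) z u || connect (deledge r [set u; v]) z v.
  by case/set2P=> ->; rewrite connect0 ?orbT.
elim: p x rp => [|z p IHp] x /=; first by left; apply: connect0.
case/andP=> rxz /IHp {}IHp; have [dxz|] := boolP (deledge r [set u; v] x z).
  have cxz : connect (deledge r [set u; v]) x z by apply: connect1.
  case: IHp => [czy|/andP[czuv ->]]; first by left; apply: connect_trans cxz czy.
  by right; case/orP: czuv => czw; rewrite (connect_trans cxz czw) ?orbT.
rewrite /deledge rxz negbK => /eqP exz.
have xuv : x \in [set u; v] by rewrite -exz set21.
have zuv : z \in [set u; v] by rewrite -exz set22.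
right; rewrite (c_uv x xuv) /=; case: IHp => [czy|/andP[_ //]].
by case/orP: (c_uv z zuv) => czw; rewrite (connect_trans _ czw) ?orbT // c_sym.
Qed.

End Symmetric.

Lemma path_deledge r A t x p : t \in A -> t \notin x :: p -> path r x p ->
  path (deledge r A) x p.
Proof.
move=> tA; elim: p x => [|y p IHp] x //=.
rewrite !inE !negb_or => /andP[tx /andP[ty tp]] /andP[rxy rp].
rewrite IHp ?inE ?negb_or ?ty // andbT /deledge rxy /=.
by apply: contraNneq tx => exy; move: tA; rewrite -exy !inE (negbTE ty) orbF.
Qed.

End DeleteEdge.

Lemma del2C (T : finType) (e : rel T) f g : del2 e f g =2 del2 e g f.
Proof. by move=> x y; rewrite /del2 [(_ != f) && _]andbC. Qed.

Lemma m12C (T : finType) (e : rel T) f g : m12 e f g = m12 e g f.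
Proof.
rewrite /m12; have -> : comps (del2 e f g) = comps (del2 e g f).
  by apply: eq_imset => x; apply/setP => y; rewrite !in_set (eq_connect (del2C e f g)).
apply: eq_big => [C|C _]; first by rewrite [_ && (C :&: g != set0)]andbC.
by apply: eq_card => A; rewrite !in_set [(A != f) && _]andbCA.
Qed.

Section Tree.
Variables (T : finType) (e : rel T).
Hypotheses (e_sym : symmetric e) (e_irr : irreflexive e).
Hypotheses (e_conn : connected e) (e_acyc : acyclic e).
Implicit Types (a b g : {set T}) (x y : T).

Lemma tree_cut p q : e p q -> ~~ connect (deledge e [set p; q]) p q.
Proof.
move=> epq; apply/negP=> /connect_uniq_path[[|z [|z' P]] [pP uP lP]].
- by move: epq; rewrite -lP /= e_irr.
- by move: pP; rewrite /= /deledge -lP eqxx andbF.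
apply/negP: (e_acyc uP isT); rewrite /cycle rcons_path lP e_sym epq andbT negbK.
by apply: sub_path pP => x y /andP[].
Qed.

Lemma connect_deledge_ends p q x : e p q ->
  connect (deledge e [set p; q]) x p || connect (deledge e [set p; q]) x q.
Proof. by case: (connect_deledge_split e_sym p q (e_conn x p)) => [->|/andP[]]. Qed.

Lemma connect_deledge_side p q x y : e p q ->
  connect (deledge e [set p; q]) x y =
  (connect (deledge e [set p; q]) q x == connect (deledge e [set p; q]) q y).
Proof.
move=> epq; set c := connect _; have c_sym := connect_deledge_sym e_sym [set p; q].
have cpq : c p q = false by apply/negbTE/tree_cut.
have ends z : c q z || c p z by rewrite ![c _ z]c_sym orbC connect_deledge_ends.
have [cqx|cqx] := boolP (c q x); have [cqy|cqy] := boolP (c q y) => /=.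
- by apply: connect_trans cqy; rewrite c_sym.
- by apply: contraNF cqy => /(connect_trans cqx).
- by apply: contraNF cqx => cxy; apply: connect_trans cqy _; rewrite c_sym.
have cpx : c p x by move: (ends x); rewrite (negbTE cqx).
have cpy : c p y by move: (ends y); rewrite (negbTE cqy).
by apply: connect_trans cpy; rewrite c_sym.
Qed.

Definition linked (g a b : {set T}) :=
  [exists x, exists y, [&& x \in a, y \in b & connect (deledge e g) x y]].

Definition separates (g a b : {set T}) := [&& g != a, g != b & ~~ linked g a b].

Definition separators (a b : {set T}) := [set g in edges e | separates g a b].

Lemma in_separators g a b : (g \in separators a b) = (g \in edges e) && separates g a b.
Proof. by rewrite in_set. Qed.

Lemma linkedI g a b x y : x \in a -> y \in b -> connect (deledge e g) x y -> linked g a b.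
Proof.
by move=> xa yb cxy; apply/existsP; exists x; apply/existsP; exists y; rewrite xa yb.
Qed.

Lemma linkedE g a b x y : a \in edges e -> b \in edges e -> g != a -> g != b ->
  x \in a -> y \in b -> linked g a b = connect (deledge e g) x y.
Proof.
rewrite ![g == _]eq_sym => aE bE ag bg xa yb; apply/idP/idP => [|]; last exact: linkedI.
case/existsP=> x' /existsP[y' /and3P[x'a y'b cx'y']].
apply: connect_trans (connect_edge_ends e_sym aE ag xa x'a) _.
exact: connect_trans cx'y' (connect_edge_ends e_sym bE bg y'b yb).
Qed.

Lemma linked_sym g a b : linked g a b = linked g b a.
Proof.
have c_sym := connect_deledge_sym e_sym g.
by apply/existsP/existsP => -[x /existsP[y /and3P[xa yb cxy]]];
  exists y; apply/existsP; exists x; rewrite xa yb c_sym.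
Qed.

Lemma separators_sym a b : separators a b = separators b a.
Proof.
by apply/setP => g; rewrite !in_separators /separates linked_sym [X in _ && X]andbCA.
Qed.

Lemma linked_walk g a p : a \in edges e -> a != g -> path (line_adj e) a p -> g \notin p ->
  linked g a (last a p).
Proof.
elim: p a => [|b p IHp] a aE ag /=.
  by move=> _ _; have /set0Pn[x xa] := edges_neq0 aE; apply: (linkedI xa xa).
case/andP=> /and4P[_ bE _ /set0Pn[x /setIP[xa xb]]] bp.
rewrite inE negb_or eq_sym => /andP[bg gp].
case/existsP: (IHp b bE bg bp gp) => y /existsP[z /and3P[yb zl cyz]].
exact: linkedI xa zl (connect_trans (connect_edge_ends e_sym bE bg xb yb) cyz).
Qed.

Lemma separators_lt_walk a b p : a \in edges e -> a != b ->
  path (line_adj e) a p -> last a p = b -> #|separators a b| < size p.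
Proof.
move=> aE ab ap lp.
have sub : b |: separators a b \subset [set c in p].
  apply/subsetP=> g; rewrite !inE => /predU1P[->|/andP[gE /and3P[ga gb]]].
    by have := mem_last a p; rewrite lp inE eq_sym (negbTE ab).
  by apply: contraNT => gp; rewrite -lp linked_walk // eq_sym.
have bS : b \notin separators a b by rewrite in_separators /separates eqxx !andbF.
have := subset_leq_card sub; rewrite cardsU1 (negbTE bS) => /leq_trans; apply.
by rewrite cardsE card_size.
Qed.

(* The first edge [c] of a shortest path from [a] towards [b] separates [a] from [b],
   and every edge separating [c] from [b] also separates [a] from [b]. *)
Lemma separators_next a b : a \in edges e -> b \in edges e -> a :&: b = set0 ->
  exists2 c, line_adj e a c & #|separators c b| < #|separators a b|.
Proof.
move=> aE bE ab0; have /edgesP[x [y [exy defa]]] := aE.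
have /set0Pn[w wb] := edges_neq0 bE.
have ca_sym := connect_deledge_sym e_sym a.
have [t ta ctw] : exists2 t, t \in a & connect (deledge e a) t w.
  by subst a; case/orP: (connect_deledge_ends w exy) => cw;
    [exists x | exists y]; rewrite ?set21 ?set22 // ca_sym.
have tNb : t \notin b by move/setP/(_ t): ab0; rewrite !inE ta /= => ->.
have [[|z P] [ctP uP lP]] := connect_uniq_path ctw.
  by move: lP tNb => /= ->; rewrite wb.
move: ctP uP => /= /andP[/andP[etz za] zP] /andP[tzP _].
set c := [set t; z] in za *; have tc : t \in c := set21 t z.
have cb : c != b by apply: contraNneq tNb => <-.
have ezP : path e z P by apply: sub_path zP => ? ? /andP[].
have czw : connect (deledge e c) z w.
  by apply/connectP; exists P; [apply: path_deledge tc tzP ezP | rewrite -lP].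
have azw : connect (deledge e a) z w by apply/connectP; exists P; rewrite -?lP.
have cS : c \in separators a b.
  rewrite in_separators edges_set2 //= /separates za cb (linkedE aE bE za cb ta wb) /=.
  apply: contraNN (tree_cut etz) => ctw'; apply: connect_trans ctw' _.
  by rewrite connect_deledge_sym.
have sub : separators c b \subset separators a b :\ c.
  apply/subsetP => g; rewrite in_setD1 !in_separators => /andP[gE /and3P[gc gb lcb]].
  rewrite gc gE /separates gb /=.
  have ga : g != a by apply: contraNneq lcb => ->; apply: linkedI (set22 t z) wb azw.
  rewrite ga /=; apply: contraNN lcb; rewrite (linkedE aE bE ga gb ta wb).
  exact: linkedI tc wb.
exists c; last by rewrite [X in _ < X](cardsD1 c) cS ltnS subset_leq_card.
by rewrite /line_adj aE edges_set2 //= eq_sym za; apply/set0Pn; exists t; rewrite inE ta tc.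
Qed.

Lemma walk_separators a b : a \in edges e -> b \in edges e -> a != b ->
  exists p, [/\ path (line_adj e) a p, last a p = b & size p <= #|separators a b|.+1].
Proof.
have [n] := ubnP #|separators a b|; elim: n a => // n IHn a ltn aE bE ab.
have [ab0|meet] := eqVneq (a :&: b) set0; last first.
  by exists [:: b]; rewrite /= /line_adj aE bE ab meet.
have [c ac ltc] := separators_next aE bE ab0.
have [<-|cb] := eqVneq c b; first by exists [:: c]; rewrite /= ac.
have cE : c \in edges e by case/and4P: ac.
have [p [cp lp sp]] := IHn c (leq_trans ltc ltn) cE bE cb.
by exists (c :: p); rewrite /= ac cp lp ltnS (leq_trans sp ltc).
Qed.

Lemma edist_separators a b : a \in edges e -> b \in edges e -> a != b ->
  edist e a b = #|separators a b|.+1.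
Proof.
move=> aE bE ab; apply: gdist_exact => [||p ap lp]; last exact: separators_lt_walk.
  have sub : separators a b \subset ~: [set a; b].
    by apply/subsetP => g; rewrite in_separators !inE negb_or => /and3P[_ -> /andP[->]].
  have := subset_leq_card sub; have := cardsC [set a; b]; rewrite cards2 ab.
  by move: #|_| #|_| #|_| => x y z; lia.
have [p [ap lp sp]] := walk_separators aE bE ab.
by exists p; split=> //; apply/eqP; rewrite eqn_leq sp separators_lt_walk.
Qed.

(* [g = pq] and [h = uv] are oriented so that [h] lies on the [q]-side of [g] and [g]
   on the [u]-side of [h].  A vertex is placed by the pair (qside, uside); the pair
   (false, false) does not occur, and the three others are the components of
   [T - {g, h}] containing [p], [v], and [q] and [u] respectively. *)
Section EdgePair.
Variables p q u v : T.
Local Notation g := [set p; q].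
Local Notation h := [set u; v].
Hypotheses (epq : e p q) (euv : e u v).
Hypothesis h_qside : {in h, forall x, connect (deledge e g) x q}.
Hypothesis g_uside : {in g, forall x, connect (deledge e h) x u}.

Definition qside x := connect (deledge e g) q x.
Definition uside x := connect (deledge e h) u x.

Lemma connect_qside x y : connect (deledge e g) x y = (qside x == qside y).
Proof. exact: connect_deledge_side. Qed.

Lemma connect_uside x y : connect (deledge e h) x y = (uside x == uside y).
Proof. by rewrite /uside setUC; apply: connect_deledge_side; rewrite e_sym. Qed.

Lemma qside_q : qside q. Proof. exact: connect0. Qed.

Lemma uside_u : uside u. Proof. exact: connect0. Qed.

Lemma qside_p : qside p = false.
Proof. by apply/negbTE; rewrite /qside connect_deledge_sym // tree_cut. Qed.

Lemma uside_v : uside v = false.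
Proof. exact/negbTE/tree_cut. Qed.

Lemma qside_h x : x \in h -> qside x.
Proof. by move/h_qside; rewrite /qside connect_deledge_sym. Qed.

Lemma uside_g x : x \in g -> uside x.
Proof. by move/g_uside; rewrite /uside connect_deledge_sym. Qed.

Lemma del2E : del2 e g h =2 deledge (deledge e g) h.
Proof. by move=> x y; rewrite /del2 /deledge andbA. Qed.

Lemma connect_del2_sides x y : connect (del2 e g h) x y ->
  qside x = qside y /\ uside x = uside y.
Proof.
rewrite (eq_connect del2E) => cxy; split; apply/eqP.
  by rewrite -connect_qside; apply: connect_sub cxy => a b /andP[dab _]; apply: connect1.
rewrite -connect_uside; apply: connect_sub cxy => a b /andP[/andP[eab _] ab_h].
by apply: connect1; rewrite /deledge eab.
Qed.

Lemma qside_or_uside x : qside x || uside x.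
Proof.
apply/norP=> -[qNx uNx]; have dg_sym := deledge_sym e_sym g.
have cxp : connect (deledge e g) x p.
  by rewrite connect_qside qside_p (negbTE qNx).
case: (connect_deledge_split dg_sym u v cxp) => [|/andP[_]].
  rewrite -(eq_connect del2E) => /connect_del2_sides[_].
  by rewrite (uside_g (set21 p q)) (negbTE uNx).
by case/orP; rewrite -(eq_connect del2E) => /connect_del2_sides[];
  rewrite qside_p ?(qside_h (set21 u v)) ?(qside_h (set22 u v)).
Qed.

Lemma connect_del2 x y :
  connect (del2 e g h) x y = (qside x == qside y) && (uside x == uside y).
Proof.
apply/idP/andP => [/connect_del2_sides[-> ->]//|[qxy uxy]].
have d2_sym : connect_sym (del2 e g h).
  by move=> a b; rewrite !(eq_connect del2E) connect_deledge_sym //; apply: deledge_sym.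
have side_uv w : connect (del2 e g h) w u || connect (del2 e g h) w v ->
    connect (del2 e g h) w (if uside w then u else v).
  by case/orP => cw; have [_ uw] := connect_del2_sides cw; rewrite uw ?uside_u ?uside_v.
have cxy : connect (deledge e g) x y by rewrite connect_qside.
case: (connect_deledge_split (deledge_sym e_sym g) u v cxy);
  rewrite -!(eq_connect del2E) => //.
case/andP=> /side_uv cx /side_uv; rewrite -(eqP uxy) => cy.
by apply: connect_trans cx _; rewrite d2_sym.
Qed.

Definition component x := [set y | connect (del2 e g h) x y].

Definition edges_in (C : {set T}) := [set A in edges e | [&& A != g, A != h & A \subset C]].

Lemma in_component x y : (y \in component x) = (qside y == qside x) && (uside y == uside x).
Proof. by rewrite inE connect_del2 (eq_sym (qside x)) (eq_sym (uside x)). Qed.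

Lemma component_eq x y : qside x = qside y -> uside x = uside y -> component x = component y.
Proof. by move=> qxy uxy; apply/setP => z; rewrite !in_component qxy uxy. Qed.

Lemma edge_sides A x y : A \in edges e -> A != g -> A != h -> x \in A -> y \in A ->
  qside x = qside y /\ uside x = uside y.
Proof.
move=> AE Ag Ah xA yA; split; apply/eqP.
  by rewrite -connect_qside (connect_edge_ends e_sym AE Ag xA yA).
by rewrite -connect_uside (connect_edge_ends e_sym AE Ah xA yA).
Qed.

Lemma sub_component A x y : A \in edges e -> A != g -> A != h -> x \in A ->
  (A \subset component y) = (qside x == qside y) && (uside x == uside y).
Proof.
move=> AE Ag Ah xA; apply/subsetP/idP => [/(_ x xA)|sxy z zA]; rewrite in_component //.
by have [-> ->] := edge_sides AE Ag Ah zA xA.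
Qed.

Lemma component_meet_g x : (component x :&: g != set0) = uside x.
Proof.
apply/set0Pn/idP => [[y /setIP[]]|ux].
  by rewrite in_component => /andP[_ /eqP<-] /uside_g.
have [qx|qNx] := boolP (qside x).
  by exists q; rewrite in_setI in_component qx qside_q (uside_g (set22 p q)) ux set22.
by exists p; rewrite in_setI in_component (negbTE qNx) qside_p (uside_g (set21 p q)) ux set21.
Qed.

Lemma component_meet_h x : (component x :&: h != set0) = qside x.
Proof.
apply/set0Pn/idP => [[y /setIP[]]|qx].
  by rewrite in_component => /andP[/eqP<- _] /qside_h.
have [ux|uNx] := boolP (uside x).
  by exists u; rewrite in_setI in_component ux uside_u (qside_h (set21 u v)) qx set21.
by exists v; rewrite in_setI in_component (negbTE uNx) uside_v (qside_h (set22 u v)) qx set22.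
Qed.

Lemma m12_sides : m12 e g h = #|edges_in (component p)| * #|edges_in (component v)|.
Proof.
have comp_in x : component x \in comps (del2 e g h) by apply/imsetP; exists x.
have meets x := (component_meet_g x, component_meet_h x).
rewrite /m12 (bigD1 (component p)) /=; last by rewrite comp_in !meets qside_p andbF.
rewrite (bigD1 (component v)) /=; last first.
  rewrite comp_in !meets uside_v /=; apply/eqP => /setP/(_ v).
  by rewrite !in_component !eqxx qside_p (qside_h (set22 u v)).
rewrite big1 ?muln1 // => C /andP[/andP[/andP[/imsetP[x _ ->] meetNx] Np] Nv].
move: meetNx Np Nv (qside_or_uside x); rewrite -/(component x) !meets.
case qx: (qside x); case ux: (uside x) => //= _.
  by rewrite (@component_eq x v) ?eqxx ?qx ?ux ?uside_v ?(qside_h (set22 u v)).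
by rewrite (@component_eq x p) ?eqxx ?qx ?ux ?qside_p ?(uside_g (set21 p q)).
Qed.

Lemma in_edges_in A C :
  (A \in edges_in C) = [&& A \in edges e, A != g, A != h & A \subset C].
Proof. by rewrite in_set. Qed.

Lemma separates_qside a b x y : a \in edges e -> b \in edges e -> a != g -> b != g ->
  x \in a -> y \in b -> separates g a b = (qside x != qside y).
Proof.
move=> aE bE ag bg xa yb; rewrite ![_ == g]eq_sym in ag bg.
by rewrite /separates ag bg (linkedE aE bE ag bg xa yb) connect_qside.
Qed.

Lemma separates_uside a b x y : a \in edges e -> b \in edges e -> a != h -> b != h ->
  x \in a -> y \in b -> separates h a b = (uside x != uside y).
Proof.
move=> aE bE ah bh xa yb; rewrite ![_ == h]eq_sym in ah bh.
by rewrite /separates ah bh (linkedE aE bE ah bh xa yb) connect_uside.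
Qed.

Lemma separated_pairs :
  [set P in offdiag (edges e) | separates g P.1 P.2 && separates h P.1 P.2] =
  setX (edges_in (component p)) (edges_in (component v)) :|:
  setX (edges_in (component v)) (edges_in (component p)).
Proof.
apply/setP => -[a b]; rewrite in_set in_setU !in_setX in_set /= !in_edges_in.
case aE: (a \in edges e); case bE: (b \in edges e); rewrite /= ?andbF //.
have [->|ag] := eqVneq a g; first by rewrite /separates !eqxx /= ?andbF.
have [->|bg] := eqVneq b g; first by rewrite /separates !eqxx /= ?andbF.
have [->|ah] := eqVneq a h; first by rewrite /separates !eqxx /= ?andbF.
have [->|bh] := eqVneq b h; first by rewrite /separates !eqxx /= ?andbF.
have /set0Pn[x xa] := edges_neq0 aE; have /set0Pn[y yb] := edges_neq0 bE.
rewrite (separates_qside aE bE ag bg xa yb) (separates_uside aE bE ah bh xa yb).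
rewrite !(sub_component _ aE ag ah xa) !(sub_component _ bE bg bh yb) /=.
rewrite qside_p uside_v (uside_g (set21 p q)) (qside_h (set22 u v)).
have [ab|ab] := eqVneq a b.
  by subst b; have [-> ->] := edge_sides aE ag ah xa yb; case: (qside y); case: (uside y).
move: (qside_or_uside x) (qside_or_uside y).
by case: (qside x); case: (uside x); case: (qside y); case: (uside y).
Qed.

Lemma card_separated_pairs_sides :
  #|[set P in offdiag (edges e) | separates g P.1 P.2 && separates h P.1 P.2]| = 2 * m12 e g h.
Proof.
rewrite separated_pairs cardsU !cardsX m12_sides.
set X := edges_in (component p); set Y := edges_in (component v).
suff -> : setX X Y :&: setX Y X = set0 by rewrite cards0 subn0 mulnC mul2n -addnn.
apply/setP => -[a b]; rewrite in_setI !in_setX in_set0 /= !in_edges_in.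
apply/negP => /andP[/andP[/and4P[aE ag ah aX] _] /andP[/and4P[_ _ _ aY] _]].
have /set0Pn[x xa] := edges_neq0 aE.
move: aX aY; rewrite !(sub_component _ aE ag ah xa).
by rewrite qside_p uside_v (uside_g (set21 p q)) (qside_h (set22 u v)); case: (qside x).
Qed.

End EdgePair.

Lemma edge_orient g h : g \in edges e -> h \in edges e -> h != g ->
  exists p q, [/\ e p q, g = [set p; q] & {in h, forall x, connect (deledge e g) x q}].
Proof.
move=> /edgesP[p [q [epq defg]]] hE hg.
have /set0Pn[y yh] := edges_neq0 hE.
have cy x : x \in h -> connect (deledge e g) x y.
  by move=> xh; exact: (connect_edge_ends e_sym hE hg xh yh).
case/orP: (connect_deledge_ends y epq); rewrite -defg => cyz.
  exists q, p; rewrite e_sym setUC; split=> // x xh; exact: connect_trans (cy x xh) cyz.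
by exists p, q; split=> // x xh; apply: connect_trans (cy x xh) cyz.
Qed.

Lemma card_separated_pairs g h : g \in edges e -> h \in edges e -> g != h ->
  #|[set P in offdiag (edges e) | separates g P.1 P.2 && separates h P.1 P.2]| = 2 * m12 e g h.
Proof.
move=> gE hE gh; have hg : h != g by rewrite eq_sym.
have [p [q [epq defg h_q]]] := edge_orient gE hE hg.
have [v [u [evu defh g_u]]] := edge_orient hE gE gh.
rewrite setUC in defh; subst g h.
by apply: card_separated_pairs_sides; rewrite // e_sym.
Qed.

Lemma edist_sym a b : a \in edges e -> b \in edges e -> edist e a b = edist e b a.
Proof.
move=> aE bE; have [->//|ab] := eqVneq a b; have ba : b != a by rewrite eq_sym.
by rewrite !edist_separators // separators_sym.
Qed.

Lemma sum_separators_pairs :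
  \sum_(P in offdiag (edges e)) #|separators P.1 P.2| * #|separators P.1 P.2|.-1 =
  2 * \sum_(Q in offdiag (edges e)) m12 e Q.1 Q.2.
Proof.
set O := offdiag (edges e).
have pairs_in P : #|separators P.1 P.2| * #|separators P.1 P.2|.-1 =
    #|[set Q in O | separates Q.1 P.1 P.2 && separates Q.2 P.1 P.2]|.
  rewrite -card_offdiag; apply: eq_card => Q; rewrite in_set !in_offdiag !in_separators.
  by case: (Q.1 \in edges e) (Q.2 \in edges e) => [] []; rewrite ?andbF //= andbA andbC.
rewrite (eq_bigr _ (fun P _ => pairs_in P)) double_count big_distrr /=.
by apply: eq_bigr => Q; rewrite in_set => /and3P[gE hE gh]; rewrite card_separated_pairs.
Qed.

Lemma edge_wiener_identity s : uniq s -> s =i edges e ->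
  Wedge2 e + 2 * 'C(size s, 2) =
  3 * Wedge e +
  2 * \sum_(k < size s) \sum_(l < size s | k < l) m12 e (nth set0 s k) (nth set0 s l).
Proof.
move=> s_uniq s_E; set O := offdiag (edges e).
have e_uniq := enum_uniq (edges e); have e_E := mem_enum (edges e).
have W : 2 * Wedge e = \sum_(P in O) edist e P.1 P.2.
  exact (sum_ltn_pairs set0 e_uniq e_E edist_sym).
have W2 : 2 * Wedge2 e = \sum_(P in O) edist e P.1 P.2 ^ 2.
  have d2_sym : {in edges e &, forall a b, edist e a b ^ 2 = edist e b a ^ 2}.
    by move=> a b aE bE; rewrite edist_sym.
  exact (sum_ltn_pairs set0 e_uniq e_E d2_sym).
have M := sum_ltn_pairs set0 s_uniq s_E (fun g h _ _ => m12C e g h).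
have C : 2 * 'C(size s, 2) = \sum_(P in O) 1.
  by rewrite mul2n double_bin2 (size_enum_set s_uniq s_E) sum1_card card_offdiag.
have D : \sum_(P in O) edist e P.1 P.2 ^ 2 + 2 * \sum_(P in O) 1 =
    3 * \sum_(P in O) edist e P.1 P.2 +
    \sum_(P in O) #|separators P.1 P.2| * #|separators P.1 P.2|.-1.
  rewrite !big_distrr -!big_split /=; apply: eq_bigr => P.
  rewrite in_offdiag => /and3P[aE bE ab]; rewrite edist_separators //.
  by case: #|_| => [|n] /=; nia.
apply/eqP; rewrite -(eqn_pmul2l (ltn0Sn 1)) 2!mulnDr W2 C D sum_separators_pairs.
by rewrite [2 * (3 * _)]mulnCA W -M.
Qed.

End Tree.

Local Open Scope ring_scope.

Theorem mainTheorem4 (T : finType) (e : rel T) (s : seq {set T}) :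
  is_tree e ->
  uniq s -> (forall A, (A \in s) = (A \in edges e)) ->
  WWedge e =
    2 * (Wedge e)%:R
    + (\sum_(k < size s) \sum_(l < size s | (k < l)%N)
          m12 e (nth set0 s k) (nth set0 s l))%:R
    - ('C(size s, 2))%:R.
Proof.
case=> e_sym e_irr e_conn e_acyc s_uniq s_E.
have := edge_wiener_identity e_sym e_irr e_conn e_acyc s_uniq s_E.
move=> /(congr1 (fun n => n%:R : rat)).
by rewrite /= /WWedge 2!natrD !natrM; lra.
Qed.
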